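(* Let $\Sigma$ be a real symmetric positive semidefinite $n\times n$ matrix, let \[\mathcal S(\Sigma)=\{(\hat\Sigma,\tilde\Sigma)\mid \Sigma=\hat\Sigma+\tilde\Sigma,\ \hat\Sigma\ge0,\ \tilde\Sigma\ge 0,\ \tilde\Sigma\text{ diagonal}\},\] and for $K\in\mathbb R^{n\times n}$ let $L(K,\hat\Sigma,\tilde\Sigma)=\operatorname{trace}(\hat\Sigma-K\hat\Sigma-\hat\Sigma K'+K(\hat\Sigma+\tilde\Sigma)K')$. Then \[\min_{K}\max_{(\hat\Sigma,\tilde\Sigma)\in\mathcal S(\Sigma)}L(K,\hat\Sigma,\tilde\Sigma)=\max_{(\hat\Sigma,\tilde\Sigma)\in\mathcal S(\Sigma)}\min_K L(K,\hat\Sigma,\tilde\Sigma).\]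
   Context: All matrices $\hat\Sigma,\tilde\Sigma$ are real symmetric $n\times n$; $M\ge0$ means positive semidefinite. *)

From mathcomp Require Import all_boot all_order all_algebra.
From mathcomp Require Import reals.
Set Implicit Arguments. Unset Strict Implicit. Unset Printing Implicit Defensive.
Import Order.TTheory GRing.Theory Num.Theory.
Local Open Scope ring_scope.

Section Defs.
Variable R : realType.

Definition psd n (A : 'M[R]_n) : Prop :=
  A^T = A /\ forall x : 'cV[R]_n, 0 <= (x^T *m A *m x) ord0 ord0.

Definition symmetric n (A : 'M[R]_n) : Prop := A^T = A.

Definition Sset n (Sigma : 'M[R]_n) (p : 'M[R]_n * 'M[R]_n) : Prop :=
  Sigma = p.1 + p.2 /\ psd p.1 /\ psd p.2 /\ is_diag_mx p.2.

Definition Lfun n (K Sh St : 'M[R]_n) : R :=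
  \tr (Sh - K *m Sh - Sh *m K^T + K *m (Sh + St) *m K^T).

Definition is_max_of T (P : T -> Prop) (f : T -> R) (m : R) : Prop :=
  (exists x, P x /\ f x = m) /\ forall x, P x -> f x <= m.

Definition is_min_of T (P : T -> Prop) (f : T -> R) (m : R) : Prop :=
  (exists x, P x /\ f x = m) /\ forall x, P x -> m <= f x.

(* v = min_K max_{p in S(Sigma)} L(K,p), with all extrema existing *)
Definition is_minmax_value n (Sigma : 'M[R]_n) (v : R) : Prop :=
  (forall K : 'M[R]_n, exists m, is_max_of (Sset Sigma) (fun p => Lfun K p.1 p.2) m)
  /\ (exists K0 : 'M[R]_n, is_max_of (Sset Sigma) (fun p => Lfun K0 p.1 p.2) v)
  /\ (forall (K : 'M[R]_n) m,
        is_max_of (Sset Sigma) (fun p => Lfun K p.1 p.2) m -> v <= m).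

(* v = max_{p in S(Sigma)} min_K L(K,p), with all extrema existing *)
Definition is_maxmin_value n (Sigma : 'M[R]_n) (v : R) : Prop :=
  (forall p, Sset Sigma p -> exists m, is_min_of (fun _ : 'M[R]_n => True) (fun K => Lfun K p.1 p.2) m)
  /\ (exists p0, Sset Sigma p0 /\
        is_min_of (fun _ : 'M[R]_n => True) (fun K => Lfun K p0.1 p0.2) v)
  /\ (forall p m, Sset Sigma p ->
        is_min_of (fun _ : 'M[R]_n => True) (fun K => Lfun K p.1 p.2) m -> m <= v).

End Defs.

From mathcomp Require Import all_boot all_order all_algebra.
From mathcomp Require Import reals ring lra.
From mathcomp Require Import finmap boolp classical_sets topology normedtype matrix_normedtype.
Import Order.TTheory GRing.Theory Num.Theory.
Import numFieldNormedType.Exports.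
Set Implicit Arguments. Unset Strict Implicit. Unset Printing Implicit Defensive.
Local Open Scope ring_scope.
Local Open Scope classical_set_scope.

(* Parametrise S(Sigma) by the diagonal d of the second matrix, and write
   L(K, d) for L(K, Sigma - diag d, diag d): it is affine in d and a convex
   quadratic in K, and the admissible d (0 <= diag d <= Sigma) form a compact
   convex set.  Since diag d <= Sigma gives ker Sigma <= ker (Sigma - diag d),
   the minimum over K is attained at K_d = (Sigma - diag d) Sigma^+.  The value
   phi(d) = min_K L(K, d) is an infimum of affine functions, hence upper
   semicontinuous, and attains its maximum at some ds.  An envelope argument
   shows that K_ds is also a best response to every admissible d, so
   (K_ds, ds) is a saddle point and both min-max and max-min equal phi(ds). *)

Section ScalarFacts.
Variable R : realFieldType.

Lemma quad_ge0_lin_coef_eq0 (a b : R) : 0 <= a -> 0 <= b ->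
  (forall t, 0 <= 2 * t * a + t ^+ 2 * b) -> a = 0.
Proof.
move=> a_ge0 b_ge0 quad_ge0.
set t := - a / (b + 1).
have tb : t * (b + 1) = - a by rewrite divfK // gt_eqF // ltr_wpDl.
have := quad_ge0 t; nra.
Qed.

Lemma le0_of_quad_bound (x c : R) : 0 <= c ->
  (forall t, 0 < t <= 1 -> t * x <= t ^+ 2 * c) -> x <= 0.
Proof.
move=> c_ge0 bound; rewrite leNgt; apply/negP => x_gt0.
have xc_gt0 : 0 < x + c by lra.
set t := x / (x + c).
have t_gt0 : 0 < t by rewrite divr_gt0.
have t_le1 : t <= 1 by rewrite ler_pdivrMr // mul1r lerDl.
have txc : t * (x + c) = x by rewrite divfK ?gt_eqF.
have := bound t; rewrite t_gt0 t_le1 => /(_ isT) gain.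
have : 0 < t ^+ 2 * x by rewrite mulr_gt0 ?exprn_gt0.
nra.
Qed.

End ScalarFacts.

Section QuadraticForms.
Variables (R : realFieldType) (n : nat).
Implicit Types (A B E P : 'M[R]_n) (x u : 'cV[R]_n) (d : 'rV[R]_n).

Definition qform A x : R := (x^T *m A *m x) ord0 ord0.

Definition form_ge0 A : Prop := forall x, 0 <= qform A x.

Lemma qformB A B x : qform (A - B) x = qform A x - qform B x.
Proof. by rewrite /qform mulmxBr mulmxBl !mxE. Qed.

Lemma qform_diag d x : qform (diag_mx d) x = \sum_j x j ord0 ^+ 2 * d ord0 j.
Proof.
by rewrite /qform mul_mx_diag mxE; apply: eq_bigr => j _; rewrite !mxE; ring.
Qed.

Lemma qform_diag_conv d d' t x : qform (diag_mx (d + t *: (d' - d))) x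
  = (1 - t) * qform (diag_mx d) x + t * qform (diag_mx d') x.
Proof.
rewrite !qform_diag !mulr_sumr -big_split /=; apply: eq_bigr => j _.
by rewrite !mxE; ring.
Qed.

Lemma qform_delta A i : qform A (delta_mx i ord0) = A i i.
Proof. by rewrite /qform trmx_delta -rowE -colE !mxE. Qed.

Lemma mxtrace_qform E P : \tr (E *m P *m E^T) = \sum_i qform P (row i E)^T.
Proof.
apply: eq_bigr => i _; rewrite /qform trmxK !mxE.
apply: eq_bigr => j _; rewrite !mxE; congr (_ * _).
by apply: eq_bigr => k _; rewrite !mxE.
Qed.

Lemma mxtrace_form_ge0 E P : form_ge0 P -> 0 <= \tr (E *m P *m E^T).
Proof. by move=> P_ge0; rewrite mxtrace_qform; apply: sumr_ge0 => i _. Qed.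

Lemma mxtrace_mul_diag A d : \tr (A *m diag_mx d) = \sum_i A i i * d ord0 i.
Proof. by apply: eq_bigr => i _; rewrite mul_mx_diag mxE. Qed.

Lemma qform_addZ P x u t : P^T = P ->
  qform P (x + t *: u) =
  qform P x + 2 * t * (u^T *m P *m x) ord0 ord0 + t ^+ 2 * qform P u.
Proof.
move=> symP.
have swap : (x^T *m P *m u) ord0 ord0 = (u^T *m P *m x) ord0 ord0.
  have tr1 (M : 'M[R]_1) : M ord0 ord0 = M^T ord0 ord0 by rewrite mxE.
  by rewrite tr1 !trmx_mul trmxK symP mulmxA.
have trZ : (t *: u)^T = t *: u^T by apply/matrixP => i j; rewrite !mxE.
rewrite /qform [(_ + _)^T]linearD /= trZ !mulmxDl !mulmxDr -!scalemxAl -!scalemxAr.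
move: swap; set a := x^T *m P *m x; set b := x^T *m P *m u.
set c := u^T *m P *m x; set e := u^T *m P *m u.
by rewrite !mxE => ->; ring.
Qed.

Lemma qform_eq0_ker P x : P^T = P -> form_ge0 P -> qform P x = 0 -> P *m x = 0.
Proof.
move=> symP P_ge0 qx0; set u := P *m x.
have uPx : (u^T *m P *m x) ord0 ord0 = \sum_i u i ord0 ^+ 2.
  by rewrite -mulmxA mxE; apply: eq_bigr => i _; rewrite mxE expr2.
have sq_ge0 i : 0 <= u i ord0 ^+ 2 by apply: sqr_ge0.
have /(psumr_eq0P (fun i _ => sq_ge0 i)) u0 : \sum_i u i ord0 ^+ 2 = 0.
  apply: quad_ge0_lin_coef_eq0 (P_ge0 u) _; first exact: sumr_ge0.
  by move=> t; have := P_ge0 (x + t *: u); rewrite qform_addZ // qx0 add0r uPx.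
apply/matrixP => i j; rewrite ord1 [RHS]mxE.
by apply/eqP; rewrite -sqrf_eq0 u0.
Qed.

Lemma form_le_ker {A B x} : A^T = A -> form_ge0 A -> form_ge0 (B - A) ->
  B *m x = 0 -> A *m x = 0.
Proof.
move=> symA A_ge0 BA_ge0 Bx0; apply: qform_eq0_ker => //.
have qBx : qform B x = 0 by rewrite /qform -mulmxA Bx0 mulmx0 mxE.
apply/eqP; rewrite eq_le A_ge0 andbT.
by have := BA_ge0 x; rewrite qformB qBx sub0r oppr_ge0.
Qed.

Lemma form_le_submx A B : A^T = A -> form_ge0 A -> form_ge0 (B - A) -> (A <= B)%MS.
Proof.
move=> symA A_ge0 BA_ge0; rewrite submxE; apply/eqP/matrixP => i j.
have Bx0 : B *m col j (cokermx B) = 0 by rewrite colE mulmxA mulmx_coker mul0mx.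
have := form_le_ker symA A_ge0 BA_ge0 Bx0.
rewrite colE mulmxA -colE => /(congr1 (fun M : 'cV[R]_n => M i ord0)).
by rewrite !mxE.
Qed.

End QuadraticForms.

Lemma closed_affine_ge0 (R : realType) n (a : 'I_n -> R) (b : R) :
  closed [set v : 'rV[R]_n | 0 <= b + \sum_i a i * v ord0 i].
Proof.
have cont_sum (s : seq 'I_n) :
    continuous (fun v : 'rV[R]_n => \sum_(i <- s) a i * v ord0 i).
  elim: s => [|i s IH].
    by under eq_fun do rewrite big_nil; exact: cst_continuous.
  under eq_fun do rewrite big_cons.
  move=> x; apply: (@continuousD _ _ _ (fun v : 'rV[R]_n => a i * v ord0 i)) (IH x).
  apply: (@continuousM _ _ (fun=> a i) (fun v : 'rV[R]_n => v ord0 i)).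
    exact: cst_continuous.
  exact: coord_continuous.
have cont_aff : continuous (fun v : 'rV[R]_n => b + \sum_i a i * v ord0 i).
  by move=> x; apply: continuousD (cont_sum _ x); exact: cst_continuous.
exact: (proj1 (continuous_closedP _) cont_aff _ (@closed_ge R 0)).
Qed.

Lemma compact_usc_max (T : ptopologicalType) (R : realDomainType) (A : set T)
    (f : T -> R) :
  compact A -> A !=set0 -> (forall c, closed (A `&` [set x | c <= f x])) ->
  exists2 x, A x & forall y, A y -> f y <= f x.
Proof.
move=> cA [x0 Ax0] closed_sup.
have finite_max (s : seq T) : {subset s <= A} ->
    exists2 y, A y & forall z, z \in s -> f z <= f y.
  elim: s => [|x s IH] sA; first by exists x0.
  have [z zs|y Ay ys] := IH; first by apply: sA; rewrite in_cons zs orbT.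
  have Ax : A x by rewrite -in_setE; apply: sA; rewrite mem_head.
  have [fxy|fyx] := leP (f x) (f y).
    by exists y => // z; rewrite in_cons => /predU1P [->|/ys].
  exists x => // z; rewrite in_cons => /predU1P [-> //|/ys fzy].
  exact: le_trans fzy (ltW fyx).
move: cA; rewrite compact_In0 => /(_ T A (fun y => A `&` [set x | f y <= f x])).
case.
- by exists (fun y => A `&` [set x | f y <= f x]) => // y _; rewrite setIA setIid.
- move=> D sDA; have [y Ay ymax] := finite_max D sDA.
  by exists y => z zD; split => //; apply: ymax.
- move=> x xmax; exists x; first by have [] := xmax x0 Ax0.
  by move=> y Ay; have [_ []] := xmax y Ay.
Qed.

Section SaddlePoint.
Variables (R : realType) (n : nat) (S : 'M[R]_n).
Hypotheses (symS : S^T = S) (S_ge0 : form_ge0 S).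
Implicit Types (K E : 'M[R]_n) (d : 'rV[R]_n).

Definition Ldiag K d := Lfun K (S - diag_mx d) (diag_mx d).

Lemma sym_diag_split d : (S - diag_mx d)^T = S - diag_mx d.
Proof. by rewrite [LHS]linearB /= symS tr_diag_mx. Qed.

Lemma LdiagE K d : Ldiag K d = \tr S - \tr (diag_mx d)
  - 2 * (\tr (K *m S) - \tr (K *m diag_mx d)) + \tr (K *m S *m K^T).
Proof.
rewrite /Ldiag /Lfun subrK !mxtraceD !raddfN /= -[\tr (_ *m _^T)]mxtrace_tr.
by rewrite trmx_mul trmxK sym_diag_split mulmxBr !raddfB /=; ring.
Qed.

Lemma Ldiag_affine K d :
  Ldiag K d = Ldiag K 0 + \sum_i (2 * K i i - 1) * d ord0 i.
Proof.
rewrite !LdiagE [diag_mx 0]raddf0 mulmx0 mxtrace0 !mxtrace_mul_diag mxtrace_diag.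
have -> : \sum_i (2 * K i i - 1) * d ord0 i
          = 2 * \sum_i K i i * d ord0 i - \sum_i d ord0 i.
  by rewrite mulr_sumr -sumrB; apply: eq_bigr => i _; ring.
ring.
Qed.

Lemma Ldiag_expand K0 d0 E d : K0 *m S = S - diag_mx d0 ->
  Ldiag (K0 + E) d = Ldiag K0 d + \tr (E *m S *m E^T)
                     + 2 * \tr (E *m (diag_mx d - diag_mx d0)).
Proof.
move=> K0S; have SK0 : S *m K0^T = S - diag_mx d0.
  by rewrite -[S in S *m _]symS -trmx_mul K0S sym_diag_split.
rewrite !LdiagE [(K0 + E)^T]linearD /= !mulmxDl !mulmxDr !raddfD /=.
rewrite -[K0 *m S *m K0^T]mulmxA -[E *m S *m K0^T]mulmxA SK0 K0S.
rewrite -[\tr (_ *m E^T)]mxtrace_tr trmx_mul trmxK sym_diag_split.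
by rewrite !mulmxBr !raddfB /=; ring.
Qed.

Lemma Ldiag_conv K x y t :
  Ldiag K (x + t *: (y - x)) = Ldiag K x + t * (Ldiag K y - Ldiag K x).
Proof.
rewrite (Ldiag_affine _ x) (Ldiag_affine _ y) Ldiag_affine.
set a := fun i => 2 * K i i - 1.
have -> : \sum_i a i * (x + t *: (y - x)) ord0 i
    = \sum_i a i * x ord0 i + t * (\sum_i a i * y ord0 i - \sum_i a i * x ord0 i).
  by rewrite -sumrB mulr_sumr -big_split /=; apply: eq_bigr => i _; rewrite !mxE; ring.
ring.
Qed.

Definition feasible d := form_ge0 (diag_mx d) /\ form_ge0 (S - diag_mx d).

Lemma feasible0 : feasible 0.
Proof.
have D0 x : qform (diag_mx 0) x = 0.
  by rewrite qform_diag big1 // => j _; rewrite mxE mulr0.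
by split=> x; rewrite ?qformB D0 ?subr0.
Qed.

Lemma feasible_ge0 d i : feasible d -> 0 <= d ord0 i.
Proof. by case=> /(_ (delta_mx i ord0)); rewrite qform_delta mxE eqxx mulr1n. Qed.

Lemma feasible_le_diag d i : feasible d -> d ord0 i <= S i i.
Proof.
by case=> _ /(_ (delta_mx i ord0)); rewrite qform_delta !mxE eqxx mulr1n subr_ge0.
Qed.

Lemma feasible_conv d d' t :
  feasible d -> feasible d' -> 0 <= t <= 1 -> feasible (d + t *: (d' - d)).
Proof.
move=> [D_ge0 SD_ge0] [D'_ge0 SD'_ge0] /andP[t_ge0 t_le1].
split=> x; rewrite ?qformB qform_diag_conv.
  by have := D_ge0 x; have := D'_ge0 x; nra.
by have := SD_ge0 x; have := SD'_ge0 x; rewrite !qformB; nra.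
Qed.

Lemma closed_feasible : closed [set d | feasible d].
Proof.
have qSD x d :
    qform (S - diag_mx d) x = qform S x + \sum_j - x j ord0 ^+ 2 * d ord0 j.
  by rewrite qformB qform_diag -sumrN; under [in RHS]eq_bigr do rewrite mulNr.
have -> : [set d | feasible d] = \bigcap_(x in [set: 'cV[R]_n])
    ([set d | 0 <= 0 + \sum_j x j ord0 ^+ 2 * d ord0 j] `&`
     [set d | 0 <= qform S x + \sum_j - x j ord0 ^+ 2 * d ord0 j]).
  apply/seteqP; split=> d /=.
    move=> [D_ge0 SD_ge0] x _; split=> /=; first by rewrite add0r -qform_diag.
    by rewrite -qSD.
  move=> ineqs; split=> x; have [/= D_ge0 SD_ge0] := ineqs x I.
    by rewrite qform_diag -[X in _ <= X]add0r.
  by rewrite qSD.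
by apply: closed_bigI => x _; apply: closedI; exact: closed_affine_ge0.
Qed.

Lemma compact_feasible : compact [set d | feasible d].
Proof.
apply: (subclosed_compact closed_feasible (@rV_compact _ n
  (fun i => `[0, S i i]%classic) (fun i => @segment_compact R 0 (S i i)))).
by move=> d d_feas i /=; rewrite in_itv /= feasible_ge0 ?feasible_le_diag.
Qed.

Definition Kbest d := (S - diag_mx d) *m pinvmx S.

Lemma Kbest_mulmx d : feasible d -> Kbest d *m S = S - diag_mx d.
Proof.
move=> [D_ge0 SD_ge0]; apply: mulmxKpV.
by apply: form_le_submx (sym_diag_split d) SD_ge0 _; rewrite opprB addrC subrK.
Qed.

Definition Lbest d := Ldiag (Kbest d) d.

Lemma Lbest_le d K : feasible d -> Lbest d <= Ldiag K d.
Proof.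
move=> d_feas; have -> : K = Kbest d + (K - Kbest d) by rewrite addrC subrK.
rewrite (Ldiag_expand _ _ (Kbest_mulmx d_feas)).
by rewrite subrr mulmx0 mxtrace0 mulr0 addr0 lerDl mxtrace_form_ge0.
Qed.

Lemma closed_feasible_Ldiag_ge K c :
  closed ([set d | feasible d] `&` [set d | c <= Ldiag K d]).
Proof.
apply: closedI closed_feasible _.
have -> : [set d | c <= Ldiag K d] =
    [set d | 0 <= (Ldiag K 0 - c) + \sum_i (2 * K i i - 1) * d ord0 i].
  by apply/seteqP; split=> d /=; rewrite (Ldiag_affine K d) => ?; lra.
exact: closed_affine_ge0.
Qed.

(* [Lbest] is the pointwise infimum of the affine functions [Ldiag K]. *)
Lemma closed_feasible_Lbest_ge c :
  closed ([set d | feasible d] `&` [set d | c <= Lbest d]).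
Proof.
have -> : [set d | feasible d] `&` [set d | c <= Lbest d] =
    \bigcap_(K in [set: 'M[R]_n]) ([set d | feasible d] `&` [set d | c <= Ldiag K d]).
  apply/seteqP; split=> d /=.
    by move=> [d_feas c_le] K _; split=> //; apply: le_trans c_le (Lbest_le _ d_feas).
  by move=> ineqs; exact: ineqs (Kbest d) I.
by apply: closed_bigI => K _; exact: closed_feasible_Ldiag_ge.
Qed.

Lemma Ldiag_attains_max K :
  exists2 d, feasible d & forall d', feasible d' -> Ldiag K d' <= Ldiag K d.
Proof.
apply: compact_usc_max; first exact: compact_feasible.
  by exists 0; exact: feasible0.
exact: closed_feasible_Ldiag_ge.
Qed.

Lemma diag_weight_le_mxtrace d E :
  feasible d -> \sum_i d ord0 i * E i i ^+ 2 <= \tr (E *m S *m E^T).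
Proof.
move=> d_feas; have [_ SD_ge0] := d_feas.
have -> : E *m S *m E^T = E *m (S - diag_mx d) *m E^T + E *m diag_mx d *m E^T.
  by rewrite -mulmxDl -mulmxDr subrK.
rewrite mxtraceD -[X in X <= _]add0r lerD ?mxtrace_form_ge0 // mxtrace_qform.
apply: ler_sum => i _; rewrite qform_diag (bigD1 i) //= !mxE mulrC lerDl.
by apply: sumr_ge0 => j _; rewrite mulr_ge0 ?sqr_ge0 ?feasible_ge0.
Qed.

Lemma cross_term_ge d d' E t : feasible d -> feasible d' ->
  - (t ^+ 2 * (2 * \sum_i (d ord0 i + d' ord0 i)))
    <= \tr (E *m S *m E^T) + 2 * t * \tr (E *m (diag_mx d - diag_mx d')).
Proof.
move=> d_feas d'_feas.
have := diag_weight_le_mxtrace E d_feas; have := diag_weight_le_mxtrace E d'_feas.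
rewrite mulmxBr raddfB /= !mxtrace_mul_diag.
have sq_sum_ge0 : 0 <= \sum_i (d ord0 i * (E i i + 2 * t) ^+ 2
                               + d' ord0 i * (E i i - 2 * t) ^+ 2).
  by apply: sumr_ge0 => i _; rewrite addr_ge0 // mulr_ge0 ?sqr_ge0 ?feasible_ge0.
have expand : \sum_i (d ord0 i * (E i i + 2 * t) ^+ 2 + d' ord0 i * (E i i - 2 * t) ^+ 2)
    = \sum_i d ord0 i * E i i ^+ 2 + \sum_i d' ord0 i * E i i ^+ 2
      + 4 * t * (\sum_i E i i * d ord0 i - \sum_i E i i * d' ord0 i)
      + 4 * t ^+ 2 * \sum_i (d ord0 i + d' ord0 i).
  by rewrite -sumrB !mulr_sumr -!big_split /=; apply: eq_bigr => i _; ring.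
lra.
Qed.

Lemma Ldiag_perturb_ge ds d' K t : feasible ds -> feasible d' ->
  Ldiag (Kbest ds) ds + t * (Ldiag (Kbest ds) d' - Ldiag (Kbest ds) ds)
    - t ^+ 2 * (2 * \sum_i (d' ord0 i + ds ord0 i))
  <= Ldiag K (ds + t *: (d' - ds)).
Proof.
move=> ds_feas d'_feas.
have -> : K = Kbest ds + (K - Kbest ds) by rewrite addrC subrK.
rewrite (Ldiag_expand _ _ (Kbest_mulmx ds_feas)) Ldiag_conv.
have -> : diag_mx (ds + t *: (d' - ds)) - diag_mx ds
          = t *: (diag_mx d' - diag_mx ds).
  apply/matrixP => i j; rewrite !mxE.
  by case: (i == j); rewrite ?mulr1n ?mulr0n; ring.
rewrite -scalemxAr mxtraceZ.
have := cross_term_ge (K - Kbest ds) t d'_feas ds_feas; lra.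
Qed.

(* Envelope argument: moving from a maximiser [ds] of [Lbest] towards [d'] by [t]
   changes [Lbest] by [t * (Ldiag (Kbest ds) d' - Ldiag (Kbest ds) ds)] up to
   [O(t^2)], so this first-order term cannot be positive. *)
Lemma Kbest_best_response ds d' : feasible ds ->
  (forall d, feasible d -> Lbest d <= Lbest ds) -> feasible d' ->
  Ldiag (Kbest ds) d' <= Ldiag (Kbest ds) ds.
Proof.
move=> ds_feas ds_max d'_feas; rewrite -subr_le0.
apply: (@le0_of_quad_bound _ _ (2 * \sum_i (d' ord0 i + ds ord0 i))).
  by rewrite mulr_ge0 // sumr_ge0 // => i _; rewrite addr_ge0 ?feasible_ge0.
move=> t /andP[t_gt0 t_le1]; set dt := ds + t *: (d' - ds).
have dt_feas : feasible dt by apply: feasible_conv => //; rewrite (ltW t_gt0) t_le1.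
have := ds_max _ dt_feas; have := Ldiag_perturb_ge (Kbest dt) t ds_feas d'_feas.
rewrite /Lbest -/dt; lra.
Qed.

Lemma saddle_point : exists2 ds, feasible ds &
  (forall d, feasible d -> Ldiag (Kbest ds) d <= Lbest ds)
  /\ (forall K, Lbest ds <= Ldiag K ds).
Proof.
have [ds ds_feas ds_max] := compact_usc_max compact_feasible
  (ex_intro _ 0 feasible0) closed_feasible_Lbest_ge.
exists ds => //; split=> [d|K]; [exact: Kbest_best_response | exact: Lbest_le].
Qed.

Lemma feasible_Sset d : feasible d -> Sset S (S - diag_mx d, diag_mx d).
Proof.
move=> [D_ge0 SD_ge0]; split; first by rewrite /= subrK.
split; first by split=> //; exact: sym_diag_split.
by split; [split=> //; exact: tr_diag_mx | exact: diag_mx_is_diag].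
Qed.

Lemma Sset_feasible p :
  Sset S p -> exists2 d, p = (S - diag_mx d, diag_mx d) & feasible d.
Proof.
case: p => Sh St [/= S_eq [[_ Sh_ge0] [[_ St_ge0] /is_diag_mxP St_diag]]].
pose dSt : 'rV[R]_n := \row_i St i i.
have St_eq : St = diag_mx dSt.
  apply/matrixP => i j; rewrite !mxE; case: eqVneq => [->|ij]; first by rewrite mulr1n.
  by rewrite mulr0n St_diag.
have Sh_eq : Sh = S - St by rewrite S_eq addrK.
exists dSt; first by rewrite Sh_eq; congr (_ - _, _).
by split=> x; [move: (St_ge0 x) | move: (Sh_ge0 x)]; rewrite ?Sh_eq St_eq.
Qed.

End SaddlePoint.

Theorem proposition12 (R : realType) (n : nat) (Sigma : 'M[R]_n) :
  psd Sigma ->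
  exists v : R, is_minmax_value Sigma v /\ is_maxmin_value Sigma v.
Proof.
move=> [symS S_ge0].
have [ds ds_feas [best_response Lbest_min]] := saddle_point symS S_ge0.
have ps_S : Sset Sigma (Sigma - diag_mx ds, diag_mx ds) by exact: feasible_Sset.
exists (Lbest Sigma ds); split; split.
- move=> K; have [d d_feas d_max] := Ldiag_attains_max symS S_ge0 K.
  exists (Ldiag Sigma K d); split; last by move=> _ /Sset_feasible [d' -> /d_max].
  by exists (Sigma - diag_mx d, diag_mx d); split=> //; exact: feasible_Sset.
- split; last by move=> K m [_ m_max]; apply: le_trans (Lbest_min K) (m_max _ ps_S).
  exists (Kbest Sigma ds); split; first by exists (Sigma - diag_mx ds, diag_mx ds).
  by move=> _ /Sset_feasible [d -> /best_response].
- move=> _ /Sset_feasible [d -> d_feas]; exists (Lbest Sigma d).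
  by split; [exists (Kbest Sigma d) | move=> K _; exact: Lbest_le].
- split; last first.
    move=> _ m /Sset_feasible [d -> d_feas] [_ m_min].
    exact: le_trans (m_min _ I) (best_response _ d_feas).
  exists (Sigma - diag_mx ds, diag_mx ds); split=> //.
  by split; [exists (Kbest Sigma ds) | move=> K _; exact: Lbest_min].
Qed.
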